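(* Let $Q$ be the quiver arising from a connected finite groupoid. Then $Q$ satisfies the quantum Yang–Baxter equation.
   Context: The quiver arising from a groupoid $\mathcal{G}$ (finitely many objects, finite hom-sets) has the objects as vertices and one arrow $x\to y$ for each morphism in $\mathrm{Hom}(x,y)$ (identities included); its adjacency matrix is $A_{xy}=|\mathrm{Hom}(x,y)|$. The groupoid is connected if $\mathrm{Hom}(x,y)\neq\emptyset$ for all objects $x,y$. An $m^2\times m^2$ matrix $X$ satisfies the quantum Yang–Baxter equation if $(X\otimes I_m)(I_m\otimes X)(X\otimes I_m)=(I_m\otimes X)(X\otimes I_m)(I_m\otimes X)$ ($\otimes$ the Kronecker product). A quiver with $m\times m$ adjacency matrix $A$ satisfies the quantum Yang–Baxter equation if the matrix $A\otimes A$ does. *)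

From mathcomp Require Import all_boot all_order all_algebra.
From mathcomp Require Export mxtens.
Set Implicit Arguments. Unset Strict Implicit. Unset Printing Implicit Defensive.
Import GRing.Theory.
Local Open Scope ring_scope.

Record finGroupoid := FinGroupoid {
  gobj : finType;
  ghom : gobj -> gobj -> finType;
  gid : forall x, ghom x x;
  gcomp : forall x y z, ghom y z -> ghom x y -> ghom x z;
  ginv : forall x y, ghom x y -> ghom y x;
  gcompA : forall w x y z (f : ghom w x) (g : ghom x y) (h : ghom y z),
      gcomp h (gcomp g f) = gcomp (gcomp h g) f;
  gcomp1l : forall x y (f : ghom x y), gcomp (gid y) f = f;
  gcomp1r : forall x y (f : ghom x y), gcomp f (gid x) = f;
  gcompVl : forall x y (f : ghom x y), gcomp (ginv f) f = gid x;
  gcompVr : forall x y (f : ghom x y), gcomp f (ginv f) = gid y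
}.

Definition groupoid_connected (G : finGroupoid) : Prop :=
  forall x y : gobj G, (0 < #|ghom x y|)%N.

(* Adjacency matrix of the quiver arising from G (vertices = objects,
   enumerated via enum_val; one arrow x -> y per morphism in Hom(x,y)):
   A_xy = |Hom(x,y)|, with integer entries. *)
Definition groupoid_adj (G : finGroupoid) : 'M[int]_(#|gobj G|) :=
  \matrix_(i, j) (#|ghom (enum_val i) (enum_val j)|%:Z).

Definition QYBE (R : pzRingType) (m : nat) (X : 'M[R]_(m * m)) : Prop :=
  let XI : 'M[R]_(m * m * m) := X *t (1%:M : 'M[R]_m) in
  let IX : 'M[R]_(m * m * m) :=
    castmx (mulnA m m m, mulnA m m m) ((1%:M : 'M[R]_m) *t X) in
  XI *m IX *m XI = IX *m XI *m IX.

Definition quiver_QYBE (m : nat) (A : 'M[int]_m) : Prop := QYBE (A *t A).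

(* In a connected groupoid, composing with fixed morphisms x' -> x and y -> y'
   embeds Hom(x, y) into Hom(x', y'), so all hom-sets have the same size and
   the adjacency matrix A is constant; hence so is A (x) A.  For a constant
   matrix X, the products (X (x) I)(I (x) X) and (I (x) X)(X (x) I) are the
   same constant matrix, and X (x) I and I (x) X have the same column sums,
   which forces both sides of the Yang-Baxter equation to agree. *)
From mathcomp Require Import all_boot all_order all_algebra.
From mathcomp Require Import zify.
Set Implicit Arguments. Unset Strict Implicit. Unset Printing Implicit Defensive.
Import GRing.Theory.
Local Open Scope ring_scope.

Lemma sumr_delta (V : nmodType) (I : finType) (j : I) (F : I -> V) :
  \sum_i F i *+ (i == j) = F j.
Proof.
rewrite (bigD1 j) //= eqxx mulr1n big1 ?addr0 // => i /negbTE ->.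
by rewrite mulr0n.
Qed.

Lemma braid_mulmx_const (R : pzSemiRingType) n (A B : 'M[R]_n) k r :
    A *m B = const_mx k -> B *m A = const_mx k ->
    (forall l, \sum_j A j l = r) -> (forall l, \sum_j B j l = r) ->
  A *m B *m A = B *m A *m B.
Proof.
move=> AB BA sumA sumB; rewrite AB BA; apply/matrixP => i l.
rewrite !mxE; under eq_bigr do rewrite mxE; under [RHS]eq_bigr do rewrite mxE.
by rewrite -!mulr_sumr sumA sumB.
Qed.

Lemma tensmx_const (R : pzRingType) m n p q (a b : R) :
  (const_mx a : 'M_(m, n)) *t (const_mx b : 'M_(p, q)) = const_mx (a * b).
Proof.
apply/matrixP => i j.
case: (mxtens_indexP i) => i1 i2; case: (mxtens_indexP j) => j1 j2.
by rewrite tensmxE !mxE.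
Qed.

Section ConstantQYBE.
Variables (R : pzRingType) (m : nat) (c : R).

Definition mxtens_index3 (a b d : 'I_m) : 'I_(m * m * m) :=
  mxtens_index (mxtens_index (a, b), d).

Lemma mxtens_index3P k : exists a b d, k = mxtens_index3 a b d.
Proof.
case: (mxtens_indexP k) => ab d; case: (mxtens_indexP ab) => a b.
by exists a, b, d.
Qed.

Lemma big_mxtens_index3 (F : 'I_(m * m * m) -> R) :
  \sum_k F k = \sum_a \sum_b \sum_d F (mxtens_index3 a b d).
Proof.
have reindex_tens p q (H : 'I_(p * q) -> R) :
    \sum_k H k = \sum_i \sum_j H (mxtens_index (i, j)).
  rewrite (reindex (@mxtens_index p q)); last first.
    by exists (@mxtens_unindex p q) => ? _; rewrite ?mxtens_indexK ?mxtens_unindexK.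
  by rewrite pair_bigA; apply: eq_bigr => -[].
by rewrite reindex_tens (reindex_tens m m (fun ab => \sum_d F (mxtens_index (ab, d)))).
Qed.

Let XI : 'M[R]_(m * m * m) := (const_mx c : 'M_(m * m)) *t (1%:M : 'M_m).
Let IX : 'M[R]_(m * m * m) :=
  castmx (mulnA m m m, mulnA m m m) ((1%:M : 'M_m) *t (const_mx c : 'M_(m * m))).

Lemma XI_index3 a b d a' b' d' :
  XI (mxtens_index3 a b d) (mxtens_index3 a' b' d') = c *+ (d == d').
Proof. by rewrite tensmxE !mxE mulr_natr. Qed.

Lemma IX_index3 a b d a' b' d' :
  IX (mxtens_index3 a b d) (mxtens_index3 a' b' d') = c *+ (a == a').
Proof.
have assoc x y z (e : (m * m * m = m * (m * m))%N) :
    cast_ord e (mxtens_index3 x y z) = mxtens_index (x, mxtens_index (y, z)).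
  by apply: val_inj => /=; lia.
by rewrite castmxE !assoc tensmxE !mxE mulr_natl.
Qed.

Lemma XI_mul_IX : XI *m IX = const_mx (c * c *+ m).
Proof.
apply/matrixP => k l.
have [a [b [d ->]]] := mxtens_index3P k; have [a' [b' [d' ->]]] := mxtens_index3P l.
rewrite !mxE big_mxtens_index3.
under eq_bigr do under eq_bigr do under eq_bigr do
  rewrite XI_index3 IX_index3 mulrnAl mulrnAr mulrnAC [d == _]eq_sym.
under eq_bigr do under eq_bigr do rewrite sumrMnl sumr_delta.
by under eq_bigr do rewrite sumrMnl; rewrite sumr_delta sumr_const card_ord.
Qed.

Lemma IX_mul_XI : IX *m XI = const_mx (c * c *+ m).
Proof.
apply/matrixP => k l.
have [a [b [d ->]]] := mxtens_index3P k; have [a' [b' [d' ->]]] := mxtens_index3P l.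
rewrite !mxE big_mxtens_index3.
under eq_bigr do under eq_bigr do under eq_bigr do
  rewrite IX_index3 XI_index3 mulrnAl mulrnAr [a == _]eq_sym.
under eq_bigr do under eq_bigr do rewrite sumrMnl sumr_delta.
by under eq_bigr do rewrite sumrMnl; rewrite sumr_delta sumr_const card_ord.
Qed.

Lemma sum_col_XI l : \sum_k XI k l = c *+ (m * m).
Proof.
have [a' [b' [d' ->]]] := mxtens_index3P l; rewrite big_mxtens_index3.
under eq_bigr do under eq_bigr do under eq_bigr do rewrite XI_index3.
under eq_bigr do under eq_bigr do rewrite sumr_delta.
by rewrite !sumr_const !card_ord -mulrnA.
Qed.

Lemma sum_col_IX l : \sum_k IX k l = c *+ (m * m).
Proof.
have [a' [b' [d' ->]]] := mxtens_index3P l; rewrite big_mxtens_index3.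
under eq_bigr do under eq_bigr do under eq_bigr do rewrite IX_index3.
under eq_bigr do under eq_bigr do rewrite sumrMnl.
by under eq_bigr do rewrite sumrMnl; rewrite sumr_delta !sumr_const !card_ord -mulrnA.
Qed.

Lemma QYBE_const_mx : QYBE (const_mx c : 'M[R]_(m * m)).
Proof.
exact: braid_mulmx_const XI_mul_IX IX_mul_XI sum_col_XI sum_col_IX.
Qed.

End ConstantQYBE.

Section ConnectedGroupoid.
Variable G : finGroupoid.

Lemma gcompKl (x y z : gobj G) (h : ghom y z) (u : ghom x y) :
  gcomp (ginv h) (gcomp h u) = u.
Proof. by rewrite gcompA gcompVl gcomp1l. Qed.

Lemma gcompKr (x y z : gobj G) (g : ghom y z) (k : ghom x y) :
  gcomp (gcomp g k) (ginv k) = g.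
Proof. by rewrite -gcompA gcompVr gcomp1r. Qed.

Lemma card_ghom_le (x y x' y' : gobj G) (k : ghom x' x) (h : ghom y y') :
  (#|ghom x y| <= #|ghom x' y'|)%N.
Proof.
apply: (@leq_card _ _ (fun g => gcomp h (gcomp g k))).
apply: (can_inj (g := fun g => gcomp (gcomp (ginv h) g) (ginv k))) => g.
by rewrite gcompKl gcompKr.
Qed.

Hypothesis connG : groupoid_connected G.

Lemma card_ghom_eq (x y x' y' : gobj G) : #|ghom x y| = #|ghom x' y'|.
Proof.
have hom (u v : gobj G) : ghom u v by have /card_gt0P/sigW[f _] := connG u v.
by apply/eqP; rewrite eqn_leq !(card_ghom_le (hom _ _) (hom _ _)).
Qed.

Lemma groupoid_adj_const : exists c, groupoid_adj G = const_mx c.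
Proof.
case: (pickP (gobj G)) => [x0 _ | gobj0].
  by exists #|ghom x0 x0|%:Z; apply/matrixP => i j; rewrite !mxE (card_ghom_eq _ _ x0 x0).
exists 0; apply/matrixP => i; have := ltn_ord i.
by rewrite {2}(eq_card0 gobj0).
Qed.

End ConnectedGroupoid.

Theorem corollary2p14 (G : finGroupoid) :
  groupoid_connected G -> quiver_QYBE (groupoid_adj G).
Proof.
move=> connG; have [c ->] := groupoid_adj_const connG.
by rewrite /quiver_QYBE tensmx_const; apply: QYBE_const_mx.
Qed.
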